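(* Consider a ROS~2 application executed on a single processor by the events executor with the two-queue mechanism described in the context, under the standing assumptions of the context. If $\tau_b$ is the currently running subtask and $\tau_a$ is any released but unscheduled subtask in the executor's queues, then their priorities satisfy $P_a \leq P_b$.
   Context: Model: a ROS~2 application is abstracted as a forest of trees of subtasks. Roots are released periodically/sporadically with known integer job priorities; a child subtask is released immediately when its parent completes, and inherits its parent's priority (fixed job-level priority). Execution is non-preemptive on a single processor; larger priority values mean higher priority. Executor mechanism: released root subtasks go into a priority queue (root_queue); a released child subtask is assigned the value latest_priority and pushed onto a LIFO queue (child_queue); at each scheduling decision (which occurs whenever the processor becomes free) the tops of the two queues are compared, the one of greater priority is popped and executed, and latest_priority is set to its priority. *)

From HB Require Import structures.
From mathcomp Require Import all_boot all_order all_algebra.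
Set Implicit Arguments. Unset Strict Implicit. Unset Printing Implicit Defensive.
Import Order.TTheory GRing.Theory Num.Theory.
Local Open Scope ring_scope.

(* A subtask instance (job of a subtask) is a pair (node, P) where node is a
   node of the forest of subtasks and P : int its (fixed, job-level) priority.
   Larger value = higher priority. *)
Notation inst V := (V * int)%type.

Definition child_insts (V : eqType) (children : V -> seq V) (x : inst V)
  : seq (inst V) := [seq (c, x.2) | c <- children x.1].

(* Executor state:
   - root_q  : content of the root priority queue (a multiset, order irrelevant)
   - child_q : child LIFO queue, head = top; each entry is (instance, value)
               where value is the latest_priority assigned at push time
   - latest  : the variable latest_priority
   - running : the subtask instance currently executing on the processor. *)
Record state (V : eqType) := State {
  root_q : seq (inst V);
  child_q : seq (inst V * int);
  latest : int;
  running : option (inst V) }.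

(* A scheduling decision (processor free): compare the top of the root
   priority queue (an element of maximal priority) with the top of the LIFO
   child queue (its assigned value), pop the one of greater priority (ties
   may go either way), run it and set latest_priority to its priority value.
   [sched_step s x s'] : in state s, instance x is selected, giving s'. *)
Inductive sched_step (V : eqType) : state V -> inst V -> state V -> Prop :=
| pick_root : forall rq1 x rq2 cq l,
    all (fun y : inst V => y.2 <= x.2) (rq1 ++ rq2) ->
    (forall c v cq', cq = (c, v) :: cq' -> v <= x.2) ->
    sched_step (State (rq1 ++ x :: rq2) cq l None) x
               (State (rq1 ++ rq2) cq x.2 (Some x))
| pick_child : forall rq x v cq l,
    all (fun y : inst V => y.2 <= v) rq ->
    sched_step (State rq ((x, v) :: cq) l None) x
               (State rq cq v (Some x)).

Inductive step (V : eqType) (children : V -> seq V) (is_root : pred V)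
  : state V -> state V -> Prop :=
| step_release : forall (r : V) (p : int) s,
    is_root r ->
    step children is_root s
      (State (root_q s ++ [:: (r, p)]) (child_q s) (latest s) (running s))
| step_complete : forall rq cq l b sc,
    (* the running instance b completes; its children are released and
       pushed (in some order) on the child LIFO queue with value
       latest_priority *)
    perm_eq sc (child_insts children b) ->
    step children is_root (State rq cq l (Some b))
      (State rq ([seq (c, l) | c <- rev sc] ++ cq) l None)
| step_schedule : forall s x s',
    sched_step s x s' -> step children is_root s s'.

Inductive reachable (V : eqType) (children : V -> seq V) (is_root : pred V)
  (l0 : int) : state V -> Prop :=
| reach_init : reachable children is_root l0 (State [::] [::] l0 None)
| reach_step : forall s s', reachable children is_root l0 s ->
    step children is_root s s' -> reachable children is_root l0 s'.

(* Released but unscheduled instances: those sitting in one of the queues. *)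
Definition queued (V : eqType) (s : state V) (a : inst V) : Prop :=
  a \in root_q s \/ exists v, (a, v) \in child_q s.

(* The child queue is nonincreasing from its top and bounded by
   latest_priority, every child entry carries its own priority, and while a
   job runs latest_priority is that job's priority.  These facts are preserved
   by every executor step: children are pushed with value latest_priority,
   which is then the running parent's priority, and a scheduling decision sets
   latest_priority to a value that dominates the child queue (it is either the
   popped top of the LIFO queue, or a root priority that beat that top).  Right
   after a decision the child queue is thus dominated by the new running job,
   and the root queue is dominated by the decision rule itself. *)
From mathcomp Require Import all_boot all_order all_algebra.
Import Order.TTheory GRing.Theory Num.Theory.
Local Open Scope ring_scope.
Set Implicit Arguments. Unset Strict Implicit. Unset Printing Implicit Defensive.

Lemma path_const_cat (T : eqType) (e : rel T) (x : T) (t s : seq T) :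
  reflexive e -> all (pred1 x) t -> path e x s -> path e x (t ++ s).
Proof.
move=> e_refl; elim: t => //= y t IHt /andP[/eqP-> xt] xs.
by rewrite e_refl IHt.
Qed.

Section ExecutorInvariant.

Variables (V : eqType) (children : V -> seq V) (is_root : pred V).

Record exec_inv (s : state V) : Prop := ExecInv {
  child_q_prio : forall x v, (x, v) \in child_q s -> v = x.2;
  child_q_path : path >=%R (latest s) (map snd (child_q s));
  running_latest : forall b, running s = Some b -> latest s = b.2 }.

Lemma exec_inv_child_le_latest (s : state V) (a : inst V) (v : int) :
  exec_inv s -> (a, v) \in child_q s -> a.2 <= latest s.
Proof.
case=> prio le_latest _ a_in.
rewrite -(prio _ _ a_in).
exact: allP (order_path_min ge_trans le_latest) _ (map_f snd a_in).
Qed.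

Lemma sched_step_running (s s' : state V) (b : inst V) :
  sched_step s b s' -> running s' = Some b.
Proof. by case. Qed.

Lemma sched_step_inv (s s' : state V) (b : inst V) :
  sched_step s b s' -> exec_inv s -> exec_inv s'.
Proof.
case=> [rq1 x rq2 cq l _ top_le_x | rq x v cq l _] [prio le_latest _].
- split=> //= [|_ [<-] //].
  case: cq top_le_x prio le_latest => [//|[c w] cq] /= top_le_x _ /andP[_ cq_path].
  by rewrite (top_le_x c w cq).
- have v_prio : v = x.2 by apply: prio; rewrite mem_head.
  split=> /= [y w y_in | | _ [<-] //].
  + by apply: prio; rewrite in_cons y_in orbT.
  + by case/andP: le_latest.
Qed.

Lemma step_inv (s s' : state V) :
  step children is_root s s' -> exec_inv s -> exec_inv s'.
Proof.
case=> [r p {}s _ | rq cq l b sc sc_children | {}s x {}s' sched].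
- by case=> *; split.
- case=> /= prio le_latest /(_ b erefl) l_b; split=> //= [y w|].
  + rewrite mem_cat => /orP[/mapP[c c_in [-> ->]] | /prio //].
    rewrite mem_rev (perm_mem sc_children) in c_in.
    by case/mapP: c_in => d _ ->.
  + rewrite map_cat path_const_cat //; first exact: lexx.
    by apply/allP=> _ /mapP[e /mapP[c _ ->] ->] /=.
- exact: sched_step_inv sched.
Qed.

Lemma reachable_inv (l0 : int) (s : state V) :
  reachable children is_root l0 s -> exec_inv s.
Proof. by elim=> // {}s s' _ IHs /step_inv; apply. Qed.

Lemma sched_step_root_q_le (s s' : state V) (b : inst V) :
  exec_inv s -> sched_step s b s' ->
  all (fun y : inst V => y.2 <= b.2) (root_q s').
Proof.
move=> [prio _ _] sched.
case: sched prio => [rq1 x rq2 cq l root_le _ // | rq x v cq l root_le prio].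
by rewrite -(prio x v) ?mem_head.
Qed.

End ExecutorInvariant.

Theorem lemma3 (V : eqType) (children : V -> seq V) (is_root : pred V)
  (l0 : int) (s s' : state V) (b a : V * int) :
  reachable children is_root l0 s ->
  sched_step s b s' ->
  queued s' a ->
  a.2 <= b.2.
Proof.
move=> /reachable_inv inv_s sched.
have inv_s' := sched_step_inv sched inv_s.
case=> [a_root | [v a_child]].
- exact: allP (sched_step_root_q_le inv_s sched) a a_root.
- rewrite -(running_latest inv_s' (sched_step_running sched)).
  exact: exec_inv_child_le_latest inv_s' a_child.
Qed.
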